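(* Let $M=\{D(c_i;r_i)\}_{i=1}^m$ be a $d$-disk system and let $\mu\ge 0$. Then $\mu=\mu_M$ if and only if the set $\bigcap_{i=1}^m D(c_i;\mu r_i)$ consists of exactly one point.
   Context: A $d$-disk system is a finite collection $M=\{D_1,\dots,D_m\}$ of closed Euclidean balls $D_i=D(c_i;r_i)=\{x\in\mathbb R^d:\|x-c_i\|\le r_i\}$ with $r_i>0$. For a scale $\lambda\ge0$, the rescaled system is $M_\lambda=\{D(c_i;\lambda r_i)\}_{i=1}^m$ (for $\lambda=0$, $D(c_i;0)=\{c_i\}$). The Čech scale of $M$ is $\mu_M=\inf\{\lambda\ge 0:\bigcap_{i=1}^m D(c_i;\lambda r_i)\neq\emptyset\}$. When the intersection $\bigcap_i D(c_i;\mu_M r_i)$ is a single point, that point is denoted $c_M$. *)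

(* classical reals. Points of R^d are lists of reals of length d. *)
From Stdlib Require Import Reals List.
Import ListNotations.
Open Scope R_scope.

Definition edist (x c : list R) : R :=
  sqrt (fold_right Rplus 0 (map (fun p => (fst p - snd p) ^ 2) (combine x c))).

Definition disk := (list R * R)%type.

Definition disk_system (d : nat) (M : list disk) : Prop :=
  M <> [] /\ Forall (fun D => length (fst D) = d /\ 0 < snd D) M.

Definition in_all_scaled (M : list disk) (lam : R) (x : list R) : Prop :=
  Forall (fun D => edist x (fst D) <= lam * snd D) M.

Definition cech_scales (d : nat) (M : list disk) (lam : R) : Prop :=
  0 <= lam /\ exists x, length x = d /\ in_all_scaled M lam x.

Definition is_inf (E : R -> Prop) (m : R) : Prop :=
  (forall x, E x -> m <= x) /\ (forall b, (forall x, E x -> b <= x) -> b <= m).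

Definition is_cech_scale (d : nat) (M : list disk) (mu : R) : Prop :=
  is_inf (cech_scales d M) mu.

(* If two points x, y lie in the intersection at scale a, the parallelogram law
   puts their midpoint in the intersection at a scale whose square is
   a^2 - |x - y|^2 / (4 rmax^2), rmax the largest radius; this scale is at least
   mu_M, so |x - y|^2 <= 4 rmax^2 (a^2 - mu_M^2).  With a = mu_M this gives
   uniqueness, and with a decreasing to mu_M it makes points chosen at scale a
   a Cauchy sequence whose limit lies in the (closed) intersection at mu_M.
   Conversely, a point at a scale lam < mu can be moved by a small amount and
   still lie in the intersection at scale mu, so a unique point at scale mu
   forces mu to be a lower bound of the admissible scales. *)

From Stdlib Require Import Reals List Classical ClassicalEpsilon Lra Lia.
Import ListNotations.
Open Scope R_scope.

Fixpoint sum_lt (f : nat -> R) (n : nat) : R :=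
  match n with O => 0 | S n => f O + sum_lt (fun j => f (S j)) n end.

Lemma sum_lt_add n : forall f g, sum_lt (fun j => f j + g j) n = sum_lt f n + sum_lt g n.
Proof. induction n as [|n IH]; intros f g; simpl; [lra|]. rewrite IH. lra. Qed.

Lemma sum_lt_scal n : forall k f, sum_lt (fun j => k * f j) n = k * sum_lt f n.
Proof. induction n as [|n IH]; intros k f; simpl; [lra|]. rewrite IH. lra. Qed.

Lemma sum_lt_ext n : forall f g, (forall j, (j < n)%nat -> f j = g j) -> sum_lt f n = sum_lt g n.
Proof.
  induction n as [|n IH]; intros f g Hfg; simpl; [reflexivity|].
  rewrite (Hfg 0%nat) by lia. f_equal. apply IH. intros j Hj. apply Hfg. lia.
Qed.

Lemma sum_lt_ge0 n : forall f, (forall j, 0 <= f j) -> 0 <= sum_lt f n.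
Proof.
  induction n as [|n IH]; intros f Hf; simpl; [lra|].
  specialize (IH (fun j => f (S j)) (fun j => Hf (S j))). specialize (Hf 0%nat). lra.
Qed.

Lemma sum_lt_term_le n : forall f j, (forall j, 0 <= f j) -> (j < n)%nat -> f j <= sum_lt f n.
Proof.
  induction n as [|n IH]; intros f j Hf Hj; [lia|]. simpl. destruct j as [|j].
  - pose proof (sum_lt_ge0 n (fun j => f (S j)) (fun j => Hf (S j))). lra.
  - pose proof (IH (fun j => f (S j)) j (fun j => Hf (S j)) ltac:(lia)).
    specialize (Hf 0%nat). lra.
Qed.

Lemma Un_cv_const c : Un_cv (fun _ => c) c.
Proof. intros e He. exists 0%nat. intros. unfold Rdist. rewrite Rminus_diag, Rabs_R0. lra. Qed.

Lemma sum_lt_cv n : forall (F : nat -> nat -> R) g,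
  (forall j, Un_cv (fun k => F k j) (g j)) -> Un_cv (fun k => sum_lt (F k) n) (sum_lt g n).
Proof.
  induction n as [|n IH]; intros F g HF; simpl.
  - apply Un_cv_const.
  - apply CV_plus; [apply HF|]. apply (IH (fun k j => F k (S j))). intros j. apply HF.
Qed.

Lemma Un_cv_sq_shift mu : Un_cv (fun n => (mu + RinvN n) ^ 2) (mu ^ 2).
Proof.
  pose proof (CV_plus _ _ _ _ (Un_cv_const mu) RinvN_cv) as Hcv. rewrite Rplus_0_r in Hcv.
  simpl. exact (CV_mult _ _ _ _ Hcv (CV_mult _ _ _ _ Hcv (Un_cv_const 1))).
Qed.

Lemma RinvN_antitone N n : (N <= n)%nat -> RinvN n <= RinvN N.
Proof.
  intros HNn. simpl. apply Rinv_le_contravar.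
  - pose proof (pos_INR N). lra.
  - apply Rplus_le_compat_r, le_INR, HNn.
Qed.

Definition vec_of (f : nat -> R) (d : nat) : list R := map f (seq 0 d).

Lemma length_vec_of f d : length (vec_of f d) = d.
Proof. unfold vec_of. rewrite length_map, length_seq. reflexivity. Qed.

Lemma nth_vec_of f d j : (j < d)%nat -> nth j (vec_of f d) 0 = f j.
Proof.
  intros Hj. unfold vec_of.
  rewrite nth_indep with (d' := f 0%nat) by (rewrite length_map, length_seq; exact Hj).
  rewrite map_nth, seq_nth; auto.
Qed.

Definition sqdist (d : nat) (x c : list R) : R :=
  sum_lt (fun j => (nth j x 0 - nth j c 0) ^ 2) d.

Lemma sqdist_ge0 d x c : 0 <= sqdist d x c.
Proof. apply sum_lt_ge0. intros j. apply pow2_ge_0. Qed.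

Lemma edist_sqdist x c d : length x = d -> length c = d -> edist x c = sqrt (sqdist d x c).
Proof.
  intros Hx Hc. unfold edist, sqdist. f_equal. subst d. revert c Hc.
  induction x as [|x0 x IH]; intros [|c0 c] Hc; simpl in *; try discriminate; [reflexivity|].
  f_equal. apply IH. congruence.
Qed.

Lemma coord_sq_le_sqdist d x y j : length x = d -> length y = d ->
  (nth j x 0 - nth j y 0) ^ 2 <= sqdist d x y.
Proof.
  intros Hx Hy. destruct (Nat.lt_ge_cases j d) as [Hj|Hj].
  - exact (sum_lt_term_le d (fun j => (nth j x 0 - nth j y 0) ^ 2) j
             (fun j => pow2_ge_0 _) Hj).
  - rewrite !nth_overflow by lia. replace ((0 - 0) ^ 2) with 0 by ring. apply sqdist_ge0.
Qed.

Lemma sqdist_le0_eq d x y : length x = d -> length y = d -> sqdist d x y <= 0 -> x = y.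
Proof.
  intros Hx Hy Hxy. apply nth_ext with (d := 0) (d' := 0); [congruence|].
  intros j _. pose proof (coord_sq_le_sqdist d x y j Hx Hy) as Hj.
  pose proof (pow2_ge_0 (nth j x 0 - nth j y 0)).
  apply Rminus_diag_uniq. apply NNPP. intros Hne. apply (pow_nonzero _ 2 Hne). lra.
Qed.

Definition midpoint (d : nat) (x y : list R) : list R :=
  vec_of (fun j => (nth j x 0 + nth j y 0) / 2) d.

Lemma sqdist_midpoint d x y c :
  sqdist d (midpoint d x y) c = (sqdist d x c + sqdist d y c) / 2 - sqdist d x y / 4.
Proof.
  unfold sqdist.
  rewrite (sum_lt_ext d _ (fun j => (/2 * (nth j x 0 - nth j c 0) ^ 2
      + /2 * (nth j y 0 - nth j c 0) ^ 2) + (-/4) * (nth j x 0 - nth j y 0) ^ 2)).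
  - rewrite !sum_lt_add, !sum_lt_scal. lra.
  - intros j Hj. unfold midpoint. rewrite nth_vec_of by exact Hj. field.
Qed.

Definition shift_head (e : R) (y : list R) : list R :=
  match y with [] => [] | y0 :: ys => (y0 + e) :: ys end.

Lemma length_shift_head e y : length (shift_head e y) = length y.
Proof. destruct y; reflexivity. Qed.

Lemma shift_head_neq e y : e <> 0 -> y <> [] -> shift_head e y <> y.
Proof. intros He Hy. destruct y as [|y0 ys]; [congruence|]. intros [= Hh]. lra. Qed.

Lemma sqdist_shift_head d y c e : length y = S d ->
  sqdist (S d) (shift_head e y) c = sqdist (S d) y c + e * (2 * (nth 0 y 0 - nth 0 c 0) + e).
Proof. destruct y as [|y0 ys]; [discriminate|]. intros _. unfold sqdist. simpl. ring. Qed.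

Lemma disk_system_In d M D : disk_system d M -> In D M -> length (fst D) = d /\ 0 < snd D.
Proof. intros [_ HM] HD. rewrite Forall_forall in HM. exact (HM D HD). Qed.

Lemma disk_system_nonempty d M : disk_system d M -> exists D, In D M.
Proof. intros [Hne _]. destruct M as [|D0 M]; [congruence|]. exists D0. left. reflexivity. Qed.

Lemma radius_ub (M : list disk) : exists rmax, forall D, In D M -> snd D <= rmax.
Proof.
  induction M as [|D0 M [rmax Hrmax]].
  - exists 0. intros D [].
  - exists (Rmax (snd D0) rmax). intros D [<-|HD]; [apply Rmax_l|].
    eapply Rle_trans; [apply Hrmax, HD | apply Rmax_r].
Qed.

Lemma radius_lb (M : list disk) : Forall (fun D => 0 < snd D) M ->
  exists rmin, 0 < rmin /\ forall D, In D M -> rmin <= snd D.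
Proof.
  induction M as [|D0 M IH]; intros HM.
  - exists 1. split; [lra|]. intros D [].
  - inversion HM as [|? ? HD0 HM']; subst. destruct (IH HM') as [rmin [Hrmin Hle]].
    exists (Rmin (snd D0) rmin). split; [apply Rmin_glb_lt; assumption|].
    intros D [<-|HD]; [apply Rmin_l|]. eapply Rle_trans; [apply Rmin_r | apply Hle, HD].
Qed.

Lemma in_all_scaled_sqdist d M lam x : disk_system d M -> length x = d -> 0 <= lam ->
  (in_all_scaled M lam x <-> forall D, In D M -> sqdist d x (fst D) <= (lam * snd D) ^ 2).
Proof.
  intros HM Hx Hlam. unfold in_all_scaled. rewrite Forall_forall.
  split; intros H D HD; destruct (disk_system_In d M D HM HD) as [Hc Hr];
    specialize (H D HD); rewrite (edist_sqdist x (fst D) d Hx Hc) in *;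
    assert (Hlr : 0 <= lam * snd D) by (apply Rmult_le_pos; lra).
  - rewrite <- (sqrt_pow2 _ Hlr) in H. apply sqrt_le_0 in H; [lra | apply sqdist_ge0 |].
    apply pow2_ge_0.
  - rewrite <- (sqrt_pow2 _ Hlr). apply sqrt_le_1_alt, H.
Qed.

Lemma in_all_scaled_mono d M lam lam' x : disk_system d M -> lam <= lam' ->
  in_all_scaled M lam x -> in_all_scaled M lam' x.
Proof.
  intros HM Hlam. unfold in_all_scaled. rewrite !Forall_forall. intros H D HD.
  destruct (disk_system_In d M D HM HD) as [_ Hr].
  eapply Rle_trans; [apply H, HD | apply Rmult_le_compat_r; lra].
Qed.

Section LowerBound.

Variables (d : nat) (M : list disk) (mu : R).
Hypothesis HM : disk_system d M.
Hypothesis mu_ge0 : 0 <= mu.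
Hypothesis mu_lb : forall lam, cech_scales d M lam -> mu <= lam.

Lemma cech_lb_sq_le z t : length z = d ->
  (forall D, In D M -> sqdist d z (fst D) <= t * snd D ^ 2) -> mu ^ 2 <= t.
Proof.
  intros Hz Hzt.
  assert (Ht : 0 <= t).
  { destruct (disk_system_nonempty d M HM) as [D0 HD0].
    pose proof (Hzt D0 HD0). pose proof (sqdist_ge0 d z (fst D0)).
    destruct (disk_system_In d M D0 HM HD0) as [_ Hr].
    apply Rmult_le_reg_r with (snd D0 ^ 2); [apply pow_lt, Hr | lra]. }
  assert (Hscale : cech_scales d M (sqrt t)).
  { split; [apply sqrt_pos|]. exists z. split; [exact Hz|].
    apply (in_all_scaled_sqdist d M _ z HM Hz (sqrt_pos t)).
    intros D HD. rewrite Rpow_mult_distr, pow2_sqrt by exact Ht. apply Hzt, HD. }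
  rewrite <- (pow2_sqrt t Ht). apply pow_incr. split; [exact mu_ge0 | apply mu_lb, Hscale].
Qed.

Lemma sqdist_le_of_in_all_scaled rmax a x y : (forall D, In D M -> snd D <= rmax) ->
  0 <= a -> length x = d -> length y = d ->
  in_all_scaled M a x -> in_all_scaled M a y ->
  sqdist d x y <= 4 * rmax ^ 2 * (a ^ 2 - mu ^ 2).
Proof.
  intros Hrmax Ha Hx Hy Hinx Hiny.
  rewrite in_all_scaled_sqdist in Hinx, Hiny by eassumption.
  set (s := sqdist d x y). pose proof (sqdist_ge0 d x y) as Hs.
  assert (Hrmax_pos : 0 < rmax).
  { destruct (disk_system_nonempty d M HM) as [D0 HD0].
    destruct (disk_system_In d M D0 HM HD0) as [_ Hr]. specialize (Hrmax D0 HD0). lra. }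
  set (u := s / (4 * rmax ^ 2)).
  assert (Hsu : s = 4 * rmax ^ 2 * u) by (unfold u; field; lra).
  assert (Hu : 0 <= u)
    by (unfold u; apply Rmult_le_pos; [exact Hs | left; apply Rinv_0_lt_compat; nra]).
  assert (Hmid : mu ^ 2 <= a ^ 2 - u).
  { apply (cech_lb_sq_le (midpoint d x y)); [apply length_vec_of|].
    intros D HD. rewrite sqdist_midpoint. fold s.
    pose proof (Hinx D HD). pose proof (Hiny D HD).
    destruct (disk_system_In d M D HM HD) as [_ Hr]. specialize (Hrmax D HD).
    assert (u * snd D ^ 2 <= u * rmax ^ 2)
      by (apply Rmult_le_compat_l; [exact Hu | apply pow_incr; lra]).
    rewrite Rpow_mult_distr in *. nra. }
  rewrite Hsu. nra.
Qed.

End LowerBound.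

Lemma sqdist_Cauchy_cv d (xs : nat -> list R) : (forall n, length (xs n) = d) ->
  (forall e, 0 < e -> exists N, forall n m, (N <= n)%nat -> (N <= m)%nat ->
     sqdist d (xs n) (xs m) < e) ->
  exists L, length L = d /\ forall j, Un_cv (fun n => nth j (xs n) 0) (nth j L 0).
Proof.
  intros Hlen Hcauchy.
  assert (Hcoord : forall j, Cauchy_crit (fun n => nth j (xs n) 0)).
  { intros j e He. destruct (Hcauchy (e ^ 2)) as [N HN]; [apply pow_lt, He|].
    exists N. intros n m Hn Hm. unfold Rdist.
    pose proof (HN n m Hn Hm) as Hnm.
    pose proof (coord_sq_le_sqdist d (xs n) (xs m) j (Hlen n) (Hlen m)) as Hj.
    rewrite <- pow2_abs in Hj. apply Rnot_le_lt. intros Hle.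
    pose proof (pow_incr e _ 2 (conj (Rlt_le _ _ He) Hle)). lra. }
  exists (vec_of (fun j => proj1_sig (R_complete _ (Hcoord j))) d).
  split; [apply length_vec_of|]. intros j. destruct (Nat.lt_ge_cases j d) as [Hj|Hj].
  - rewrite nth_vec_of by exact Hj. apply proj2_sig.
  - rewrite nth_overflow by (rewrite length_vec_of; exact Hj).
    intros e He. exists 0%nat. intros n _. rewrite nth_overflow by (rewrite Hlen; exact Hj).
    unfold Rdist. rewrite Rminus_0_r, Rabs_R0. exact He.
Qed.

Lemma sqdist_cv d (xs : nat -> list R) L c :
  (forall j, Un_cv (fun n => nth j (xs n) 0) (nth j L 0)) ->
  Un_cv (fun n => sqdist d (xs n) c) (sqdist d L c).
Proof.
  intros HL. apply (sum_lt_cv d (fun n j => (nth j (xs n) 0 - nth j c 0) ^ 2)).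
  intros j. simpl.
  pose proof (CV_minus _ _ _ _ (HL j) (Un_cv_const (nth j c 0))) as Hj.
  exact (CV_mult _ _ _ _ Hj (CV_mult _ _ _ _ Hj (Un_cv_const 1))).
Qed.

Lemma cech_point_above_inf d M mu a : disk_system d M -> is_cech_scale d M mu -> mu < a ->
  exists x, length x = d /\ in_all_scaled M a x.
Proof.
  intros HM [_ Hglb] Hmua. apply NNPP. intros Hnone.
  enough (a <= mu) by lra.
  apply Hglb. intros lam [_ [y [Hy Hiny]]]. apply Rnot_lt_le. intros Hlt.
  apply Hnone. exists y. split; [exact Hy|].
  apply (in_all_scaled_mono d M lam); [exact HM | lra | exact Hiny].
Qed.

Lemma cech_inf_attained d M mu : disk_system d M -> 0 <= mu -> is_cech_scale d M mu ->
  exists x, length x = d /\ in_all_scaled M mu x.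
Proof.
  intros HM Hmu Hinf. destruct (radius_ub M) as [rmax Hrmax].
  set (a n := mu + RinvN n).
  assert (Ha : forall n, mu < a n) by (intros n; pose proof (cond_pos (RinvN n)); unfold a; lra).
  assert (Hdecr : forall N n, (N <= n)%nat -> a n <= a N)
    by (intros N n HNn; unfold a; pose proof (RinvN_antitone N n HNn); lra).
  destruct (choice (fun n x => length x = d /\ in_all_scaled M (a n) x)) as [xs Hxs].
  { intros n. exact (cech_point_above_inf d M mu (a n) HM Hinf (Ha n)). }
  assert (Hdiam : Un_cv (fun N => 4 * rmax ^ 2 * (a N ^ 2 - mu ^ 2)) 0).
  { replace 0 with (4 * rmax ^ 2 * (mu ^ 2 - mu ^ 2)) by ring.
    apply CV_mult; [apply Un_cv_const|].
    apply CV_minus; [apply Un_cv_sq_shift | apply Un_cv_const]. }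
  assert (Hcauchy : forall e, 0 < e -> exists N, forall n m, (N <= n)%nat -> (N <= m)%nat ->
            sqdist d (xs n) (xs m) < e).
  { intros e He. destruct (Hdiam e He) as [N HN]. exists N. intros n m Hn Hm.
    specialize (HN N (le_n N)). unfold Rdist in HN. rewrite Rminus_0_r in HN.
    eapply Rle_lt_trans; [|eapply Rle_lt_trans; [apply Rle_abs | exact HN]].
    apply (sqdist_le_of_in_all_scaled d M mu HM Hmu (proj1 Hinf)); trivial.
    - pose proof (Ha N). lra.
    - apply Hxs.
    - apply Hxs.
    - apply (in_all_scaled_mono d M (a n)); [exact HM | apply Hdecr, Hn | apply Hxs].
    - apply (in_all_scaled_mono d M (a m)); [exact HM | apply Hdecr, Hm | apply Hxs]. }
  destruct (sqdist_Cauchy_cv d xs (fun n => proj1 (Hxs n)) Hcauchy) as [L [HL HLcv]].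
  exists L. split; [exact HL|]. apply (in_all_scaled_sqdist d M mu L HM HL Hmu).
  intros D HD. rewrite Rpow_mult_distr.
  apply (@Rle_cv_lim (fun n => sqdist d (xs n) (fst D)) (fun n => a n ^ 2 * snd D ^ 2)).
  - intros n. destruct (Hxs n) as [Hn Hin]. rewrite <- Rpow_mult_distr.
    revert D HD. apply (in_all_scaled_sqdist d M (a n)); trivial. pose proof (Ha n). lra.
  - apply sqdist_cv, HLcv.
  - apply CV_mult; [apply Un_cv_sq_shift | apply Un_cv_const].
Qed.

Lemma shift_head_in_all_scaled d M lam mu y e : disk_system (S d) M -> length y = S d ->
  0 <= lam <= mu -> 0 <= e -> (forall D, In D M -> e <= (mu - lam) * snd D) ->
  in_all_scaled M lam y -> in_all_scaled M mu (shift_head e y).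
Proof.
  intros HM Hy Hlam He Hsmall Hiny.
  rewrite in_all_scaled_sqdist in Hiny by (eassumption || lra).
  apply (proj2 (in_all_scaled_sqdist (S d) M mu (shift_head e y) HM
                  ltac:(rewrite length_shift_head; exact Hy) ltac:(lra))).
  intros D HD. specialize (Hiny D HD). specialize (Hsmall D HD).
  destruct (disk_system_In (S d) M D HM HD) as [Hc Hr].
  rewrite sqdist_shift_head by exact Hy.
  pose proof (coord_sq_le_sqdist (S d) y (fst D) 0 Hy Hc) as Hhead.
  set (w := nth 0 y 0 - nth 0 (fst D) 0) in *.
  assert (Hlr : 0 <= lam * snd D) by (apply Rmult_le_pos; lra).
  assert (Hw : w <= lam * snd D) by nra.
  assert ((lam * snd D + e) ^ 2 <= (mu * snd D) ^ 2) by (apply pow_incr; nra).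
  nra.
Qed.

Lemma unique_point_is_cech_scale d M mu : (1 <= d)%nat -> disk_system d M -> 0 <= mu ->
  (exists x, length x = d /\ in_all_scaled M mu x /\
     forall y, length y = d -> in_all_scaled M mu y -> y = x) ->
  is_cech_scale d M mu.
Proof.
  intros Hd HM Hmu [x [Hx [Hinx Huniq]]]. split.
  - intros lam [Hlam [y [Hy Hiny]]]. apply Rnot_lt_le. intros Hlt.
    destruct d as [|d]; [lia|].
    destruct (radius_lb M (Forall_impl _ (fun D HD => proj2 HD) (proj2 HM))) as [rmin [Hrmin Hle]].
    set (e := (mu - lam) * rmin).
    assert (He : 0 < e) by (apply Rmult_lt_0_compat; lra).
    assert (Hshift : in_all_scaled M mu (shift_head e y)).
    { apply (shift_head_in_all_scaled d M lam); trivial; [lra | lra |].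
      intros D HD. apply Rmult_le_compat_l; [lra | apply Hle, HD]. }
    apply (shift_head_neq e y); [lra | intros ->; discriminate|].
    transitivity x.
    + apply Huniq; [rewrite length_shift_head; exact Hy | exact Hshift].
    + symmetry. apply Huniq; [exact Hy|].
      apply (in_all_scaled_mono (S d) M lam); [exact HM | lra | exact Hiny].
  - intros b Hb. apply Hb. split; [exact Hmu|]. exists x. split; assumption.
Qed.

Theorem lemma2p1 (d : nat) (M : list disk) (mu : R) :
  (1 <= d)%nat -> disk_system d M -> 0 <= mu ->
  (is_cech_scale d M mu <->
   exists x, length x = d /\ in_all_scaled M mu x /\
     forall y, length y = d -> in_all_scaled M mu y -> y = x).
Proof.
  intros Hd HM Hmu. split.
  - intros Hinf. destruct (cech_inf_attained d M mu HM Hmu Hinf) as [x [Hx Hinx]].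
    exists x. split; [exact Hx|]. split; [exact Hinx|].
    intros y Hy Hiny. apply (sqdist_le0_eq d); [exact Hy | exact Hx|].
    destruct (radius_ub M) as [rmax Hrmax].
    pose proof (sqdist_le_of_in_all_scaled d M mu HM Hmu (proj1 Hinf) rmax mu y x
                  Hrmax Hmu Hy Hx Hiny Hinx).
    lra.
  - apply unique_point_is_cech_scale; assumption.
Qed.
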